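(* Let $\Upsilon_{0:k}$ be the Choi operator of a valid $k$-slot process tensor on $n$ qubits, and let $\Upsilon^{\mathcal{T}_P}_{0:k}:=\mathcal{T}_P^{(k)}(\Upsilon_{0:k})$ be its multi-time Pauli twirl. Then $\Upsilon^{\mathcal{T}_P}_{0:k}$ admits the process-separable decomposition \[ \Upsilon^{\mathcal{T}_P}_{0:k}=\sum_{\mathcal{P}\in\mathbb{P}^{(n,k)}}\Pr(\mathcal{P})\,\Upsilon_{\mathcal{P}},\qquad \Upsilon_{\mathcal{P}}=\bigotimes_{j=0}^k\Pi_{P_j}, \] where, for a trajectory $\mathcal{P}=(P_0,\dots,P_k)$, \[ \Pr(\mathcal{P})=\frac{w(\mathcal{P})}{\mathcal{N}},\qquad w(\mathcal{P}):=\mathrm{Tr}\Big[\Big(\bigotimes_{j=0}^k\Pi_{P_j}\Big)\Upsilon_{0:k}\Big]\ge 0,\qquad \mathcal{N}:=\sum_{\mathcal{P}\in\mathbb{P}^{(n,k)}}w(\mathcal{P}), \] and the numbers $\Pr(\mathcal{P})$ form a valid probability distribution on $\mathbb{P}^{(n,k)}$.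
   Context: $\mathbb{P}^{(n)}=\{I,X,Y,Z\}^{\otimes n}$ is the set of $n$-qubit Pauli operators (modulo phase), and $\mathbb{P}^{(n,k)}=(\mathbb{P}^{(n)})^{k+1}$ is the set of spatiotemporal Pauli trajectories $\mathcal{P}=(P_0,\dots,P_k)$. For $P\in\mathbb{P}^{(n)}$, $|P\rangle\!\rangle=(\mathbb{I}\otimes P)\sum_i|i\rangle|i\rangle$ is its vectorisation and $\Pi_P=|P\rangle\!\rangle\langle\!\langle P|$ (the Choi operator of the channel $\rho\mapsto P\rho P$), acting on $\mathcal{H}_{\mathfrak{i}_j}\otimes\mathcal{H}_{\mathfrak{o}_j}$ in the $j$-th factor. A $k$-slot process tensor has Choi operator $\Upsilon_{0:k}$ on $\bigotimes_{j=0}^k(\mathcal{H}_{\mathfrak{i}_j}\otimes\mathcal{H}_{\mathfrak{o}_j})$ (each factor an $n$-qubit space, $\mathfrak{i}_j,\mathfrak{o}_j$ the input/output at time step $j$); it is valid iff $\Upsilon_{0:k}\ge0$ and there are operators $\Upsilon_{0:j}$ on the first $j+1$ slots ($\Upsilon_{0:k}$ the given one) with $\mathrm{Tr}_{\mathfrak{o}_j}[\Upsilon_{0:j}]=\Upsilon_{0:j-1}\otimes\mathbb{I}_{\mathfrak{i}_j}$ for $j=1,\dots,k$ and $\mathrm{Tr}_{\mathfrak{o}_0}[\Upsilon_{0:0}]=\mathbb{I}_{\mathfrak{i}_0}$ (Choi operators use the unnormalised maximally entangled vector). The multi-time Pauli twirl is $\mathcal{T}_P^{(k)}(\Upsilon)=|\mathbb{P}^{(n)}|^{-(k+1)}\sum_{P_0,\dots,P_k\in\mathbb{P}^{(n)}}(\bigotimes_{j}P_j\otimes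 P_j)\Upsilon(\bigotimes_j P_j\otimes P_j)$, the $j$-th pair acting on $\mathcal{H}_{\mathfrak{i}_j}\otimes\mathcal{H}_{\mathfrak{o}_j}$. An operator is process-separable if it is a convex combination of tensor products $\Upsilon_0\otimes\cdots\otimes\Upsilon_k$ of Choi operators of CPTP channels (one per time step). *)

(* Complex numbers: algC. Operators on a finite-dimensional
   Hilbert space with orthonormal basis indexed by a finType T are
   represented by their matrix entries T -> T -> algC. *)
From HB Require Import structures.
From mathcomp Require Import all_boot all_order all_algebra all_field.
Set Implicit Arguments. Unset Strict Implicit. Unset Printing Implicit Defensive.
Import Order.TTheory GRing.Theory Num.Theory.
Local Open Scope ring_scope.

Definition Op (T : finType) := T -> T -> algC.

Definition psd (T : finType) (A : Op T) : Prop :=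
  forall v : T -> algC, 0 <= \sum_(x : T) \sum_(y : T) (v x)^* * A x y * v y.

Definition trace (T : finType) (A : Op T) : algC := \sum_(x : T) A x x.

Definition mulop (T : finType) (A B : Op T) : Op T :=
  fun x y => \sum_(z : T) A x z * B z y.

Definition qbasis (n : nat) := {ffun 'I_n -> bool}.

(* n-qubit Pauli operators modulo phase: each qubit gets 0=I,1=X,2=Y,3=Z *)
Definition pauli (n : nat) := {ffun 'I_n -> 'I_4}.

(* single-qubit Pauli matrices, basis false=|0>, true=|1> *)
Definition sigma1 (a : 'I_4) (x y : bool) : algC :=
  match val a with
  | 0 => (x == y)%:R
  | 1 => (x != y)%:R
  | 2 => if x == y then 0 else if x then 'i else - 'i
  | _ => if x == y then (if x then -1 else 1) else 0
  end.

Definition pauli_op (n : nat) (P : pauli n) : Op (qbasis n) :=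
  fun x y => \prod_(q < n) sigma1 (P q) (x q) (y q).

(* basis of H_{i_j} (x) H_{o_j} : (input index, output index) *)
Definition slot (n : nat) := (qbasis n * qbasis n)%type.

(* |P>> = (I (x) P) sum_i |i>|i>,  i.e. <<(a,b)|P>> = P_{b a} *)
Definition vecP (n : nat) (P : pauli n) (s : slot n) : algC :=
  pauli_op P s.2 s.1.

Definition PiP (n : nat) (P : pauli n) : Op (slot n) :=
  fun s t => vecP P s * (vecP P t)^*.

Definition hist (n m : nat) := {ffun 'I_m -> slot n}.

Definition tens (n m : nat) (A : 'I_m -> Op (slot n)) : Op (hist n m) :=
  fun x y => \prod_(j < m) A j (x j) (y j).

Definition traj (n k : nat) := {ffun 'I_k.+1 -> pauli n}.

Definition Ups_traj (n k : nat) (Ps : traj n k) : Op (hist n k.+1) :=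
  tens (fun j => PiP (Ps j)).

Definition PP (n : nat) (P : pauli n) : Op (slot n) :=
  fun s t => pauli_op P s.1 t.1 * pauli_op P s.2 t.2.

Definition twirl (n k : nat) (Y : Op (hist n k.+1)) : Op (hist n k.+1) :=
  fun x y => (#|pauli n|%:R : algC) ^- k.+1 *
    \sum_(Ps : traj n k)
      mulop (mulop (tens (fun j => PP (Ps j))) Y) (tens (fun j => PP (Ps j))) x y.

Definition weight (n k : nat) (Y : Op (hist n k.+1)) (Ps : traj n k) : algC :=
  trace (mulop (Ups_traj Ps) Y).

Definition normN (n k : nat) (Y : Op (hist n k.+1)) : algC :=
  \sum_(Ps : traj n k) weight Y Ps.

Definition prob (n k : nat) (Y : Op (hist n k.+1)) (Ps : traj n k) : algC :=
  weight Y Ps / normN Y.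

Definition ext (n m : nat) (x : hist n m) (s : slot n) : hist n m.+1 :=
  [ffun i => if unlift ord_max i is Some i' then x i' else s].

(* valid k-slot process tensor: Upsilon >= 0 and a chain Upsilon_{0:j}
   (here U (j+1), an operator on the first j+1 slots) with
   Tr_{o_j} U(j+1) = U j (x) I_{i_j}, where U 0 := 1 (scalar), so that the
   case j = 0 reads Tr_{o_0} Upsilon_{0:0} = I_{i_0}. *)
Definition valid_process_tensor (n k : nat) (Y : Op (hist n k.+1)) : Prop :=
  psd Y /\
  exists U : forall m : nat, Op (hist n m),
    (forall x y, U k.+1 x y = Y x y) /\
    (forall x y, U 0%N x y = 1) /\
    (forall m : nat, (m < k.+1)%N ->
       forall (x y : hist n m) (a b : qbasis n),
         \sum_(o : qbasis n) U m.+1 (ext x (a, o)) (ext y (b, o))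
           = U m x y * (a == b)%:R).

Definition cptp_choi (n : nat) (C : Op (slot n)) : Prop :=
  psd C /\ forall a b : qbasis n, \sum_(o : qbasis n) C (a, o) (b, o) = (a == b)%:R.

Definition process_separable (n k : nat) (Y : Op (hist n k.+1)) : Prop :=
  exists (I : finType) (p : I -> algC) (C : I -> 'I_k.+1 -> Op (slot n)),
    (forall i, 0 <= p i) /\ \sum_(i : I) p i = 1 /\
    (forall i j, cptp_choi (C i j)) /\
    (forall x y, Y x y = \sum_(i : I) p i * tens (C i) x y).

From HB Require Import structures.
From mathcomp Require Import all_boot all_order all_algebra all_field.
From mathcomp Require Import ring.
Set Implicit Arguments. Unset Strict Implicit. Unset Printing Implicit Defensive.
Import Order.TTheory GRing.Theory Num.Theory.
Local Open Scope ring_scope.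

(* The vectorised Paulis |P>> are orthogonal with sum_P |P>><<P| = 2^n I, so
   averaging (P (x) P) . (P (x) P) over P has the kernel sum_P Pi_P (x) Pi_P
   with two indices exchanged; tensoring over the k+1 slots gives
   twirl Y = |P|^-(k+1) sum_Ps w(Ps) Ups_Ps.  Each Ups_Ps is rank one, so
   w(Ps) = <<Ps|Y|Ps>> >= 0, and each Pi_P is the Choi operator of the unitary
   channel rho |-> P rho P.  Finally sum_Ps w(Ps) = (2^n)^(k+1) Tr Y, while the
   causality chain forces Tr Y = (2^n)^(k+1) (tracing out an output leaves the
   identity on an input of dimension 2^n), so N = |P|^(k+1) is exactly the
   normalisation of the twirl. *)

(* The entries of the Pauli matrices lie in Z[i]; computing in Z[i] as
   int * int turns the single-qubit identities into finite evaluations. *)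
Definition gaussZ := (int * int)%type.

Definition gaussC (g : gaussZ) : algC := g.1%:~R + g.2%:~R * 'i.

Definition gaussZ_add (g h : gaussZ) : gaussZ := (g.1 + h.1, g.2 + h.2).

Definition gaussZ_mul (g h : gaussZ) : gaussZ :=
  (g.1 * h.1 - g.2 * h.2, g.1 * h.2 + g.2 * h.1).

Definition gaussZ_conj (g : gaussZ) : gaussZ := (g.1, - g.2).

Lemma gaussC_add g h : gaussC (gaussZ_add g h) = gaussC g + gaussC h.
Proof. by rewrite /gaussC /= !rmorphD /=; ring. Qed.

Lemma gaussC_mul g h : gaussC (gaussZ_mul g h) = gaussC g * gaussC h.
Proof.
have ii : 'i * 'i = -1 :> algC by rewrite -expr2 sqrCi.
rewrite /gaussC /= !rmorphB !rmorphD !rmorphM /=.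
transitivity (g.1%:~R * h.1%:~R + (g.1%:~R * h.2%:~R + g.2%:~R * h.1%:~R) * 'i
              + g.2%:~R * h.2%:~R * ('i * 'i) : algC); last by ring.
by rewrite ii; ring.
Qed.

Lemma gaussC_conj g : gaussC (gaussZ_conj g) = (gaussC g)^*.
Proof.
by rewrite /gaussC /= rmorphD rmorphM /= !rmorph_int conjCi rmorphN /=; ring.
Qed.

Lemma gaussC_nat (m : nat) : gaussC (m%:Z, 0) = m%:R.
Proof. by rewrite /gaussC /= mul0r addr0. Qed.

Lemma gaussC_sum (I : Type) (r : seq I) (F : I -> gaussZ) :
  gaussC (\big[gaussZ_add/(0, 0)]_(i <- r) F i) = \sum_(i <- r) gaussC (F i).
Proof. by apply: big_morph; [exact: gaussC_add | rewrite /gaussC /= mul0r addr0]. Qed.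

Definition sigma1_gauss (a : 'I_4) (x y : bool) : gaussZ :=
  match val a with
  | 0 => ((x == y)%:Z, 0)
  | 1 => ((x != y)%:Z, 0)
  | 2 => if x == y then (0, 0) else if x then (0, 1) else (0, -1)
  | _ => if x == y then (if x then (-1, 0) else (1, 0)) else (0, 0)
  end.

Lemma sigma1_gaussE a x y : sigma1 a x y = gaussC (sigma1_gauss a x y).
Proof.
rewrite /sigma1 /sigma1_gauss /gaussC.
by case: a => [[|[|[|[|m]]]] ?] //=; case: x; case: y;
  rewrite /= ?mul0r ?mul1r ?addr0 ?add0r ?mulN1r.
Qed.

Lemma sigma1_twirl s1 s2 t1 t2 u1 u2 v1 v2 :
  \sum_(a < 4) sigma1 a s1 t1 * sigma1 a s2 t2 * (sigma1 a u1 v1 * sigma1 a u2 v2)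
  = \sum_(a < 4) sigma1 a u2 u1 * (sigma1 a t2 t1)^* * (sigma1 a s2 s1 * (sigma1 a v2 v1)^*).
Proof.
under eq_bigr do rewrite !sigma1_gaussE -!gaussC_mul.
under [RHS]eq_bigr do rewrite !sigma1_gaussE -!gaussC_conj -!gaussC_mul.
rewrite -!gaussC_sum; congr gaussC; rewrite !big_ord_recl !big_ord0.
by case: s1; case: s2; case: t1; case: t2; case: u1; case: u2; case: v1; case: v2;
  vm_compute.
Qed.

Lemma sigma1_unitary (a : 'I_4) x y :
  \sum_(o : bool) sigma1 a o x * (sigma1 a o y)^* = (x == y)%:R.
Proof.
rewrite big_bool /= !sigma1_gaussE -!gaussC_conj -!gaussC_mul -gaussC_add -gaussC_nat.
by congr gaussC; case: a => [[|[|[|[|m]]]] ?] //; case: x; case: y; vm_compute.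
Qed.

Lemma sigma1_completeness s1 s2 t1 t2 :
  \sum_(a < 4) sigma1 a s2 s1 * (sigma1 a t2 t1)^*
  = (2 * ((s1 == t1) && (s2 == t2)))%:R.
Proof.
under eq_bigr do rewrite !sigma1_gaussE -gaussC_conj -gaussC_mul.
rewrite -gaussC_sum -gaussC_nat; congr gaussC; rewrite !big_ord_recl !big_ord0.
by case: s1; case: s2; case: t1; case: t2; vm_compute.
Qed.

Lemma prodr_natb (I : finType) (c : I -> bool) :
  \prod_i (c i)%:R = [forall i, c i]%:R :> algC.
Proof.
have [call | /forallPn[i ci]] := boolP [forall i, c i].
  by rewrite big1 // => i _; rewrite (forallP call).
by rewrite (bigD1 i) //= (negbTE ci) mul0r.
Qed.

Lemma forall_eq_ffun (I T : finType) (f g : {ffun I -> T}) :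
  [forall i, f i == g i] = (f == g).
Proof. by apply/eqfunP/eqP => [/ffunP | ->]. Qed.

Lemma forall_eq_slot n (s t : slot n) :
  [forall q, (s.1 q == t.1 q) && (s.2 q == t.2 q)] = (s == t).
Proof.
case: s t => [s1 s2] [t1 t2]; rewrite xpair_eqE -!forall_eq_ffun /=.
by apply/forallP/andP => [st | [/forallP s1t1 /forallP s2t2] q];
  [split; apply/forallP => q; have /andP[] := st q | rewrite s1t1 s2t2].
Qed.

Definition rank1 (T : finType) (v : T -> algC) : Op T := fun x y => v x * (v y)^*.

Lemma psd_rank1 (T : finType) (v : T -> algC) : psd (rank1 v).
Proof.
move=> u; set c := \sum_x (u x)^* * v x.
have -> : \sum_x \sum_y (u x)^* * rank1 v x y * u y = c * c^*.
  rewrite rmorph_sum mulr_suml; apply: eq_bigr => x _.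
  rewrite mulr_sumr; apply: eq_bigr => y _.
  by rewrite /rank1 rmorphM /= conjCK; ring.
by rewrite -normCK exprn_ge0.
Qed.

Lemma trace_rank1_mul (T : finType) (v : T -> algC) (A : Op T) :
  trace (mulop (rank1 v) A) = \sum_x \sum_y (v x)^* * A x y * v y.
Proof.
rewrite /trace /mulop /rank1 exchange_big; apply: eq_bigr => x _.
by apply: eq_bigr => y _; ring.
Qed.

Lemma tens_rank1 n m (v : 'I_m -> slot n -> algC) x y :
  tens (fun j => rank1 (v j)) x y = rank1 (fun z : hist n m => \prod_j v j (z j)) x y.
Proof. by rewrite /tens /rank1 rmorph_prod -big_split. Qed.

Lemma PiP_cptp n (P : pauli n) : cptp_choi (PiP P).
Proof.
split; first exact: psd_rank1.
move=> a b; rewrite /PiP /vecP /pauli_op /=.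
under eq_bigr do rewrite rmorph_prod -big_split /=.
rewrite -(bigA_distr_bigA (fun q (o : bool) => sigma1 (P q) o (a q) * (sigma1 (P q) o (b q))^*)).
under eq_bigr do rewrite sigma1_unitary.
by rewrite prodr_natb forall_eq_ffun.
Qed.

Lemma sum_PP_mul n (s t u v : slot n) :
  \sum_(P : pauli n) PP P s t * PP P u v = \sum_(P : pauli n) PiP P u t * PiP P s v.
Proof.
rewrite /PP /PiP /vecP /pauli_op.
under eq_bigr do rewrite -!big_split /=.
under [RHS]eq_bigr do rewrite !rmorph_prod -!big_split /=.
rewrite -(bigA_distr_bigA (fun q (a : 'I_4) =>
  sigma1 a (s.1 q) (t.1 q) * sigma1 a (s.2 q) (t.2 q) *
  (sigma1 a (u.1 q) (v.1 q) * sigma1 a (u.2 q) (v.2 q)))).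
rewrite -(bigA_distr_bigA (fun q (a : 'I_4) =>
  sigma1 a (u.2 q) (u.1 q) * (sigma1 a (t.2 q) (t.1 q))^* *
  (sigma1 a (s.2 q) (s.1 q) * (sigma1 a (v.2 q) (v.1 q))^*))).
by apply: eq_bigr => q _; apply: sigma1_twirl.
Qed.

Lemma sum_PiP n (s t : slot n) :
  \sum_(P : pauli n) PiP P s t = (2 ^ n)%:R * (s == t)%:R.
Proof.
rewrite /PiP /vecP /pauli_op.
under eq_bigr do rewrite rmorph_prod -big_split /=.
rewrite -(bigA_distr_bigA (fun q (a : 'I_4) =>
  sigma1 a (s.2 q) (s.1 q) * (sigma1 a (t.2 q) (t.1 q))^*)).
under eq_bigr do rewrite sigma1_completeness natrM.
by rewrite big_split /= prodr_const card_ord prodr_natb forall_eq_slot natrX.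
Qed.

Lemma sum_tens_PP_mul n k (x z w y : hist n k.+1) :
  \sum_(Ps : traj n k) tens (fun j => PP (Ps j)) x z * tens (fun j => PP (Ps j)) w y
  = \sum_(Ps : traj n k) Ups_traj Ps w z * Ups_traj Ps x y.
Proof.
rewrite /Ups_traj /tens.
under eq_bigr do rewrite -big_split /=.
under [RHS]eq_bigr do rewrite -big_split /=.
rewrite -(bigA_distr_bigA (fun j (P : pauli n) => PP P (x j) (z j) * PP P (w j) (y j))).
rewrite -(bigA_distr_bigA (fun j (P : pauli n) => PiP P (w j) (z j) * PiP P (x j) (y j))).
by apply: eq_bigr => j _; apply: sum_PP_mul.
Qed.

Lemma sum_Ups_traj n k (w z : hist n k.+1) :
  \sum_(Ps : traj n k) Ups_traj Ps w z = (2 ^ n)%:R ^+ k.+1 * (w == z)%:R.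
Proof.
rewrite /Ups_traj /tens -(bigA_distr_bigA (fun j (P : pauli n) => PiP P (w j) (z j))).
under eq_bigr do rewrite sum_PiP.
by rewrite big_split /= prodr_const card_ord prodr_natb forall_eq_ffun.
Qed.

Lemma weight_ge0 n k (Y : Op (hist n k.+1)) (Ps : traj n k) :
  psd Y -> 0 <= weight Y Ps.
Proof.
set v := fun x : hist n k.+1 => \prod_j vecP (Ps j) (x j).
suff -> : weight Y Ps = trace (mulop (rank1 v) Y) by rewrite trace_rank1_mul; apply.
apply: eq_bigr => x _; apply: eq_bigr => z _; congr (_ * _).
exact: (tens_rank1 (fun j => vecP (Ps j)) x z).
Qed.

Lemma sum_hist_ext n m (F : hist n m.+1 -> algC) :
  \sum_x F x = \sum_(x : hist n m) \sum_(a : qbasis n) \sum_(o : qbasis n) F (ext x (a, o)).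
Proof.
pose init (x : hist n m.+1) : hist n m := [ffun i => x (widen_ord (leqnSn m) i)].
have widen_lift (i : 'I_m) : widen_ord (leqnSn m) i = lift ord_max i.
  by apply: ord_inj; rewrite lift_max.
rewrite (reindex (fun p : hist n m * slot n => ext p.1 p.2)) /=; last first.
  exists (fun x => (init x, x ord_max)) => [[x s] _ | x _].
    by congr pair; [apply/ffunP => i; rewrite !ffunE widen_lift liftK | rewrite ffunE unlift_none].
  apply/ffunP => i; rewrite ffunE.
  by case: unliftP => [j ->|->] //; rewrite ffunE widen_lift.
rewrite -(pair_bigA _ (fun x s => F (ext x s))); apply: eq_bigr => x _.
by rewrite (pair_bigA _ (fun a o => F (ext x (a, o)))); apply: eq_bigr => -[].
Qed.

Lemma trace_causal_chain n k (U : forall m : nat, Op (hist n m)) :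
  (forall x y, U 0%N x y = 1) ->
  (forall m : nat, (m < k.+1)%N -> forall (x y : hist n m) (a b : qbasis n),
     \sum_(o : qbasis n) U m.+1 (ext x (a, o)) (ext y (b, o)) = U m x y * (a == b)%:R) ->
  forall m, (m <= k.+1)%N -> trace (U m) = (2 ^ n)%:R ^+ m.
Proof.
move=> U0 U_marginal; elim=> [_ | m IHm lt_m_k].
  by rewrite /trace (eq_bigr _ (fun x _ => U0 x x)) sumr_const card_ffun card_ord expn0 expr0.
rewrite /trace sum_hist_ext.
under eq_bigr do under eq_bigr do rewrite U_marginal // eqxx mulr1.
under eq_bigr do rewrite sumr_const card_ffun card_bool card_ord.
by rewrite sumrMnl -/(trace (U m)) IHm ?(ltnW lt_m_k) // exprS mulr_natl.
Qed.

Lemma trace_valid_process_tensor n k (Y : Op (hist n k.+1)) :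
  valid_process_tensor Y -> trace Y = (2 ^ n)%:R ^+ k.+1.
Proof.
move=> [_ [U [UY [U0 U_marginal]]]].
rewrite -(trace_causal_chain U0 U_marginal (leqnn _)).
by apply: eq_bigr => x _; rewrite UY.
Qed.

Lemma normN_trace n k (Y : Op (hist n k.+1)) :
  normN Y = (2 ^ n)%:R ^+ k.+1 * trace Y.
Proof.
rewrite /normN /weight /trace /mulop exchange_big mulr_sumr; apply: eq_bigr => x _.
rewrite exchange_big; under eq_bigr do rewrite -mulr_suml sum_Ups_traj.
rewrite (bigD1 x) //= big1 => [|z zx]; first by rewrite eqxx mulr1 addr0.
have /negbTE -> : x != z by rewrite eq_sym.
by rewrite mulr0 mul0r.
Qed.

Lemma twirl_weightE n k (Y : Op (hist n k.+1)) x y :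
  twirl Y x y = #|pauli n|%:R ^- k.+1 * \sum_(Ps : traj n k) weight Y Ps * Ups_traj Ps x y.
Proof.
rewrite /twirl /weight /trace /mulop; congr (_ * _).
transitivity (\sum_z \sum_w Y z w * \sum_(Ps : traj n k) Ups_traj Ps w z * Ups_traj Ps x y).
  under eq_bigr do under eq_bigr do rewrite mulr_suml.
  rewrite exchange_big; under eq_bigr do rewrite exchange_big.
  rewrite exchange_big; apply: eq_bigr => z _; apply: eq_bigr => w _.
  by rewrite -sum_tens_PP_mul mulr_sumr; apply: eq_bigr => Ps _; rewrite mulrAC mulrC.
under [RHS]eq_bigr do rewrite mulr_suml.
under [RHS]eq_bigr do under eq_bigr do rewrite mulr_suml.
rewrite [RHS]exchange_big; under [RHS]eq_bigr do rewrite exchange_big.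
rewrite [RHS]exchange_big; apply: eq_bigr => z _; apply: eq_bigr => w _.
by rewrite mulr_sumr; apply: eq_bigr => Ps _; rewrite mulrAC mulrC.
Qed.

Lemma normN_valid_process_tensor n k (Y : Op (hist n k.+1)) :
  valid_process_tensor Y -> normN Y = #|pauli n|%:R ^+ k.+1.
Proof.
move=> valid; rewrite normN_trace trace_valid_process_tensor //.
by rewrite -exprMn -natrM -expnMn card_ffun !card_ord.
Qed.

Theorem theorem1 (n k : nat) (Y : Op (hist n k.+1)) :
  valid_process_tensor Y ->
  (forall Ps : traj n k, 0 <= weight Y Ps) /\
  (forall x y, twirl Y x y = \sum_(Ps : traj n k) prob Y Ps * Ups_traj Ps x y) /\
  (forall Ps : traj n k, 0 <= prob Y Ps) /\
  \sum_(Ps : traj n k) prob Y Ps = 1 /\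
  (forall Ps : traj n k, forall j : 'I_k.+1, cptp_choi (PiP (Ps j))) /\
  process_separable (twirl Y).
Proof.
move=> valid; have [psdY _] := valid.
have normNE := normN_valid_process_tensor valid.
have normN_gt0 : 0 < normN Y by rewrite normNE exprn_gt0 // ltr0n card_ffun !card_ord expn_gt0.
have weightY_ge0 Ps : 0 <= weight Y Ps by exact: weight_ge0.
have prob_ge0 Ps : 0 <= prob Y Ps by rewrite divr_ge0 // ltW.
have sum_prob : \sum_(Ps : traj n k) prob Y Ps = 1.
  by rewrite -mulr_suml divff // gt_eqF.
have twirlE x y : twirl Y x y = \sum_(Ps : traj n k) prob Y Ps * Ups_traj Ps x y.
  by rewrite twirl_weightE -normNE mulr_sumr; apply: eq_bigr => Ps _; rewrite mulrCA mulrA.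
have PiP_traj_cptp (Ps : traj n k) j : cptp_choi (PiP (Ps j)) by exact: PiP_cptp.
do 5!split => //.
by exists (traj n k), (prob Y), (fun (Ps : traj n k) j => PiP (Ps j)).
Qed.
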